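(* Let $m$ be a positive integer and let $Q_1,\dots,Q_m$ be the partition of $\{0,1,\dots,m+1\}^3$ given by $(x,y,z)\in Q_i \iff f(x,y,z)=i$, where $f$ is defined below. Then for every $1\le i<j\le m$, $Q_i$ and $Q_j$ are adjacent (i.e. the partition is internally adjacent).
   Context: Define $f:\{0,\dots,m+1\}^3\to\{1,\dots,m\}$ by: $f(x,y,z)=y$ if $0\le x\le m$, $1\le y\le m$, $z=0$; $f(x,y,z)=x$ if $1\le x\le m$, $0\le y\le m$, $z=m+1$; $f(x,y,z)=y$ if $x=0$, $1\le y\le m$, $1\le z\le m$; $f(x,y,z)=x$ if $1\le x\le m$, $y=0$, $1\le z\le m$; $f(x,y,z)=z$ if $1\le x\le m+1$, $1\le y\le m+1$, $1\le z\le m$; and $f(x,y,z)=1$ for all remaining points. Two disjoint sets $P,Q\subset\mathbb{Z}^3$ are adjacent if there exist $p\in P$, $q\in Q$ and a unit vector $v$ parallel to a coordinate axis with $p+v=q$. *)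

From Stdlib Require Import ZArith Lia Bool.
Open Scope bool_scope.
Open Scope Z_scope.

Definition pt := (Z * Z * Z)%type.

Definition inr (lo hi x : Z) : bool := (lo <=? x) && (x <=? hi).

(* The colouring function f : {0..m+1}^3 -> {1..m}; the five listed cases
   are pairwise disjoint, so the if-chain is order independent. *)
Definition f (m x y z : Z) : Z :=
  if inr 0 m x && inr 1 m y && (z =? 0) then y
  else if inr 1 m x && inr 0 m y && (z =? m + 1) then x
  else if (x =? 0) && inr 1 m y && inr 1 m z then y
  else if inr 1 m x && (y =? 0) && inr 1 m z then x
  else if inr 1 (m + 1) x && inr 1 (m + 1) y && inr 1 m z then z
  else 1.

Definition in_cube (m : Z) (p : pt) : Prop :=
  let '(x, y, z) := p in
  0 <= x <= m + 1 /\ 0 <= y <= m + 1 /\ 0 <= z <= m + 1.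

Definition Q (m i : Z) (p : pt) : Prop :=
  in_cube m p /\ (let '(x, y, z) := p in f m x y z = i).

Definition padd (p v : pt) : pt :=
  let '(a, b, c) := p in let '(d, e, g) := v in (a + d, b + e, c + g).

Definition unit_axis (v : pt) : Prop :=
  v = (1, 0, 0) \/ v = (-1, 0, 0) \/ v = (0, 1, 0) \/ v = (0, -1, 0)
  \/ v = (0, 0, 1) \/ v = (0, 0, -1).

Definition adjacent (P R : pt -> Prop) : Prop :=
  (forall p, ~ (P p /\ R p)) /\
  exists p q v, P p /\ R q /\ unit_axis v /\ padd p v = q.

From Stdlib Require Import ZArith Lia.
Open Scope Z_scope.

(* On the face x = 0 the colour is read off the y-coordinate, while one step
   inside the cube it is the height z; so (0, i, j) has colour i and its
   neighbour (1, i, j) has colour j. *)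

(* Tests lia cannot decide only occur in conjunctions already made false by
   a decided test, which andb_false_r then removes. *)
Ltac decide_f_tests :=
  unfold f, inr;
  repeat match goal with
  | |- context [?a <=? ?b] =>
      first [ rewrite (proj2 (Z.leb_le a b)) by lia
            | rewrite (proj2 (Z.leb_gt a b)) by lia ]
  | |- context [?a =? ?b] =>
      first [ rewrite (proj2 (Z.eqb_eq a b)) by lia
            | rewrite (proj2 (Z.eqb_neq a b)) by lia ]
  end;
  rewrite ?Bool.andb_false_r; reflexivity.

Lemma f_face_x0 (m y z : Z) :
  1 <= y <= m -> 1 <= z <= m -> f m 0 y z = y.
Proof. intros; decide_f_tests. Qed.

Lemma f_inner (m x y z : Z) :
  1 <= x <= m + 1 -> 1 <= y <= m + 1 -> 1 <= z <= m -> f m x y z = z.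
Proof. intros; decide_f_tests. Qed.

Lemma Q_eq (m i j : Z) (p : pt) : Q m i p -> Q m j p -> i = j.
Proof. destruct p as [[x y] z]; intros [_ <-] [_ <-]; reflexivity. Qed.

Lemma adjacent_Q (m i j : Z) (p v : pt) :
  i <> j -> unit_axis v -> Q m i p -> Q m j (padd p v) ->
  adjacent (Q m i) (Q m j).
Proof.
  intros Hij Hv Hp Hq; split.
  - intros r [Hi Hj]; exact (Hij (Q_eq m i j r Hi Hj)).
  - exists p, (padd p v), v; auto.
Qed.

Theorem lemma2p1 (m : Z) (hm : 1 <= m) (i j : Z) :
  1 <= i -> i < j -> j <= m -> adjacent (Q m i) (Q m j).
Proof.
  intros Hi Hij Hj.
  apply (adjacent_Q m i j (0, i, j) (1, 0, 0)).
  - lia.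
  - left; reflexivity.
  - split; [cbn; lia | apply f_face_x0; lia].
  - cbn [padd]; rewrite Z.add_0_l, !Z.add_0_r.
    split; [cbn; lia | apply f_inner; lia].
Qed.
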